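(* Fix parameters $\alpha\in[0,1)$, $\beta\ge 0$, $q>0$, a positive function $u(t)>0$ (the study-session intensity), a constant $d>0$ with $d\neq 1$, and arbitrary constants $c_1,c_2\in\mathbb{R}$. For state variables $m\in[0,1]$, $n>0$, $\Delta\ge 0$ and time $t$, set $$B_d(m)=c_2\frac{\log d}{-m^2+2m-d}-c_2\frac{\log d}{1-d}+c_1\, m\log\!\Big(\frac{1+\beta}{1-\alpha}\Big)-c_1\log(1+\beta),$$ $$g_d(m,n)=\sqrt{\tfrac{u(t)}{2}}\,\big[B_d(m)\big]_+,\qquad h_d(m,n,\Delta)=-\sqrt{q}\,\frac{m\,n}{1+\Delta}\,c_2\,\frac{(-2m+2)\log d}{(-m^2+2m-d)^2},$$ and define the loss $$\ell_d(m,n,\Delta,p)=h_d(m,n,\Delta)+g_d^2(m,n)+\tfrac12\, q\, p^2 u(t).$$ Let $$J_d(m,n,\Delta,t)=\sqrt{q}\Big(c_1\log n+c_2\frac{\log d}{-m^2+2m-d}\Big).$$ Then $\partial J_d/\partial t=0$, $\partial J_d/\partial \Delta=0$, $\partial J_d/\partial m=-\sqrt{q}\,c_2\frac{(-2m+2)\log d}{(-m^2+2m-d)^2}$, and at every point $(m,n,\Delta,t)$ with $m\in[0,1]$, $n>0$, $\Delta\ge0$ and $-m^2+2m-d\neq 0$, the function $J=J_d$ satisfies the Hamilton–Jacobi–Bellman equation $$0=J_t(m,n,\Delta,t)-\frac{n\,m}{1+\Delta}J_m(m,n,\Delta,t)+J_\Delta(m,n,\Delta,t)+\min_{p\ge 0}\Big\{\ell_d(m,n,\Delta,p)+\big[J(1,(1-\alpha)n,0,t)\,m+J(1,(1+\beta)n,0,t)\,(1-m)-J(m,n,\Delta,t)\big]\,p\,u(t)\Big\},$$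 and the minimizing (optimal) selection probability is $$p^*_d=q^{-1/2}\big[B_d(m)\big]_+ .$$
   Context: This arises from a stochastic optimal control model of a learner reviewing one question: $m$ is the probability of recalling the answer, $n$ is the forgetting rate, $\Delta$ is the time since the last review, $p$ is the probability that the question is selected in a study session, and $u(t)$ is the (given, uncontrolled) rate of study sessions. At a review, the state jumps to $m=1$, $\Delta=0$, and $n\mapsto(1-\alpha)n$ on a successful recall (probability $m$) or $n\mapsto(1+\beta)n$ on an unsuccessful recall (probability $1-m$); between reviews $dm=-\frac{nm}{1+\Delta}dt$ and $d\Delta=dt$. Notation: $[x]_+=\max(x,0)$; $J_t,J_m,J_\Delta$ denote partial derivatives of $J$ with respect to $t,m,\Delta$. *)

From Stdlib Require Import Reals.
From Coquelicot Require Import Coquelicot.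
Open Scope R_scope.

Definition pos_part (x : R) : R := Rmax x 0.

Definition Bd (alpha beta d c1 c2 m : R) : R :=
  c2 * ln d / (- m ^ 2 + 2 * m - d) - c2 * ln d / (1 - d)
  + c1 * m * ln ((1 + beta) / (1 - alpha)) - c1 * ln (1 + beta).

Definition gd (alpha beta d c1 c2 : R) (u : R -> R) (m n t : R) : R :=
  sqrt (u t / 2) * pos_part (Bd alpha beta d c1 c2 m).

Definition hd (q d c2 m n Delta : R) : R :=
  - sqrt q * (m * n / (1 + Delta)) * c2 *
    ((- 2 * m + 2) * ln d / (- m ^ 2 + 2 * m - d) ^ 2).

Definition elld (alpha beta q d c1 c2 : R) (u : R -> R) (m n Delta p t : R) : R :=
  hd q d c2 m n Delta + (gd alpha beta d c1 c2 u m n t) ^ 2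
  + / 2 * q * p ^ 2 * u t.

Definition Jd (q d c1 c2 : R) (m n Delta t : R) : R :=
  sqrt q * (c1 * ln n + c2 * ln d / (- m ^ 2 + 2 * m - d)).

(* the expression minimized over p >= 0 in the HJB equation *)
Definition hjb_obj (alpha beta q d c1 c2 : R) (u : R -> R) (m n Delta t p : R) : R :=
  elld alpha beta q d c1 c2 u m n Delta p t
  + (Jd q d c1 c2 1 ((1 - alpha) * n) 0 t * m
     + Jd q d c1 c2 1 ((1 + beta) * n) 0 t * (1 - m)
     - Jd q d c1 c2 m n Delta t) * p * u t.

From Stdlib Require Import Reals Lra.
From Coquelicot Require Import Coquelicot.
Open Scope R_scope.

(** J_d depends on neither t nor Delta, and the jump of J_d at a review is
   [-sqrt q * B_d(m)] (the [ln n] terms cancel).  Hence, with [s = sqrt q],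
   the objective is [h_d + u/2 * ((s p - B)^2 - ([B]_+ - B)^2)], a parabola in
   [p] whose minimiser over [p >= 0] is the projection [[B]_+ / s]; there the
   objective equals [h_d], which is exactly the transport term
   [n m / (1 + Delta) * J_m]. *)

Lemma is_derive_Jd_t q d c1 c2 m n Delta t :
  is_derive (fun t' => Jd q d c1 c2 m n Delta t') t 0.
Proof. unfold Jd; auto_derive; [exact I | ring]. Qed.

Lemma is_derive_Jd_Delta q d c1 c2 m n Delta t :
  is_derive (fun D' => Jd q d c1 c2 m n D' t) Delta 0.
Proof. unfold Jd; auto_derive; [exact I | ring]. Qed.

Lemma is_derive_Jd_m q d c1 c2 m n Delta t :
  - m ^ 2 + 2 * m - d <> 0 ->
  is_derive (fun m' => Jd q d c1 c2 m' n Delta t) m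
    (- sqrt q * c2 * ((- 2 * m + 2) * ln d / (- m ^ 2 + 2 * m - d) ^ 2)).
Proof. intros Hm; unfold Jd; auto_derive; [exact Hm | field; exact Hm]. Qed.

Lemma pos_part_ge0 x : 0 <= pos_part x.
Proof. apply Rmax_r. Qed.

Lemma pos_part_ge x : x <= pos_part x.
Proof. apply Rmax_l. Qed.

Lemma pos_part_mul_sub x : pos_part x * (pos_part x - x) = 0.
Proof. unfold pos_part, Rmax; destruct (Rle_dec x 0); ring. Qed.

(** [[B]_+] is the projection of [B] onto [[0, +oo)]: the cross term
   [2 x ([B]_+ - B)] of the expansion around [[B]_+] is nonnegative. *)
Lemma sqr_sub_pos_part_le B x : 0 <= x ->
  (x - pos_part B) ^ 2 + (pos_part B - B) ^ 2 <= (x - B) ^ 2.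
Proof.
  intros Hx.
  assert (Hcross : 0 <= x * (pos_part B - B))
    by (apply Rmult_le_pos; [exact Hx | generalize (pos_part_ge B); lra]).
  assert (Hexp : (x - B) ^ 2 = (x - pos_part B) ^ 2 + (pos_part B - B) ^ 2
                   + 2 * (x * (pos_part B - B)) - 2 * (pos_part B * (pos_part B - B)))
    by ring.
  rewrite Hexp, pos_part_mul_sub; lra.
Qed.

Lemma Jd_jump alpha beta q d c1 c2 m n Delta t :
  0 < 1 - alpha -> 0 < 1 + beta -> 0 < n ->
  Jd q d c1 c2 1 ((1 - alpha) * n) 0 t * m
    + Jd q d c1 c2 1 ((1 + beta) * n) 0 t * (1 - m)
    - Jd q d c1 c2 m n Delta t
  = - sqrt q * Bd alpha beta d c1 c2 m.
Proof.
  intros Ha Hb Hn; unfold Jd, Bd.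
  rewrite !ln_mult, ln_div by lra.
  replace (- 1 ^ 2 + 2 * 1 - d) with (1 - d) by ring.
  ring.
Qed.

Section Minimiser.

Variables (alpha beta q d c1 c2 : R) (u : R -> R) (m n Delta t : R).
Hypotheses (Halpha : 0 < 1 - alpha) (Hbeta : 0 < 1 + beta) (Hq : 0 < q)
  (Hu : 0 < u t) (Hn : 0 < n).

Let B := Bd alpha beta d c1 c2 m.
Let F := hjb_obj alpha beta q d c1 c2 u m n Delta t.
Let pstar := / sqrt q * pos_part B.

Lemma hjb_obj_eq p :
  F p = hd q d c2 m n Delta + u t / 2 * ((sqrt q * p - B) ^ 2 - (pos_part B - B) ^ 2).
Proof.
  unfold F, hjb_obj, elld, gd.
  rewrite Jd_jump by assumption; fold B.
  rewrite <- (sqrt_sqrt q) at 2 by lra.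
  assert (Hg : (sqrt (u t / 2) * pos_part B) ^ 2 = u t / 2 * pos_part B ^ 2)
    by (rewrite Rpow_mult_distr, pow2_sqrt by lra; reflexivity).
  assert (HB := pos_part_mul_sub B).
  rewrite Hg; nra.
Qed.

Lemma sqrt_mul_pstar : sqrt q * pstar = pos_part B.
Proof. assert (0 < sqrt q) by (apply sqrt_lt_R0, Hq). unfold pstar; field; lra. Qed.

Lemma hjb_obj_pstar : F pstar = hd q d c2 m n Delta.
Proof. rewrite hjb_obj_eq, sqrt_mul_pstar; ring. Qed.

Lemma hjb_obj_sub_pstar_ge p : 0 <= p ->
  u t / 2 * (sqrt q * (p - pstar)) ^ 2 <= F p - F pstar.
Proof.
  intros Hp.
  assert (Hsp : 0 <= sqrt q * p) by (apply Rmult_le_pos; [apply sqrt_pos | exact Hp]).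
  replace (sqrt q * (p - pstar)) with (sqrt q * p - pos_part B)
    by (rewrite <- sqrt_mul_pstar; ring).
  rewrite !hjb_obj_eq, sqrt_mul_pstar.
  generalize (sqr_sub_pos_part_le B (sqrt q * p) Hsp); nra.
Qed.

End Minimiser.

Theorem lemma2 (alpha beta q d c1 c2 : R) (u : R -> R)
  (Halpha : 0 <= alpha < 1) (Hbeta : 0 <= beta) (Hq : 0 < q)
  (Hu : forall t, 0 < u t) (Hd : 0 < d) (Hd1 : d <> 1) :
  (* J_t = 0 *)
  (forall m n Delta t,
     is_derive (fun t' => Jd q d c1 c2 m n Delta t') t 0) /\
  (* J_Delta = 0 *)
  (forall m n Delta t,
     is_derive (fun D' => Jd q d c1 c2 m n D' t) Delta 0) /\
  (* J_m *)
  (forall m n Delta t, - m ^ 2 + 2 * m - d <> 0 ->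
     is_derive (fun m' => Jd q d c1 c2 m' n Delta t) m
       (- sqrt q * c2 * ((- 2 * m + 2) * ln d / (- m ^ 2 + 2 * m - d) ^ 2))) /\
  (* HJB equation, with minimum over p >= 0 attained (uniquely) at p* *)
  (forall m n Delta t,
     0 <= m <= 1 -> 0 < n -> 0 <= Delta -> - m ^ 2 + 2 * m - d <> 0 ->
     let pstar := / sqrt q * pos_part (Bd alpha beta d c1 c2 m) in
     let F := hjb_obj alpha beta q d c1 c2 u m n Delta t in
     0 <= pstar /\
     (forall p, 0 <= p -> F pstar <= F p) /\
     (forall p, 0 <= p -> F p = F pstar -> p = pstar) /\
     0 = Derive (fun t' => Jd q d c1 c2 m n Delta t') t
         - n * m / (1 + Delta) * Derive (fun m' => Jd q d c1 c2 m' n Delta t) m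
         + Derive (fun D' => Jd q d c1 c2 m n D' t) Delta
         + F pstar).
Proof.
  split; [intros; apply is_derive_Jd_t |].
  split; [intros; apply is_derive_Jd_Delta |].
  split; [intros; apply is_derive_Jd_m; assumption |].
  intros m n Delta t _ Hn HDelta Hden pstar F.
  assert (Hut := Hu t).
  assert (Hgap : forall p, 0 <= p ->
            0 <= u t / 2 * (sqrt q * (p - pstar)) ^ 2 <= F p - F pstar).
  { intros p Hp; split; [generalize (pow2_ge_0 (sqrt q * (p - pstar))); nra |].
    apply hjb_obj_sub_pstar_ge; lra. }
  split; [| split; [| split]].
  - apply Rmult_le_pos;
      [apply Rlt_le, Rinv_0_lt_compat, sqrt_lt_R0, Hq | apply pos_part_ge0].
  - intros p Hp; generalize (Hgap p Hp); lra.
  - intros p Hp Heq.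
    assert (Hsq : (sqrt q * (p - pstar)) ^ 2 = 0) by (generalize (Hgap p Hp); nra).
    rewrite <- Rsqr_pow2 in Hsq; apply Rsqr_0_uniq, Rmult_integral in Hsq.
    generalize (sqrt_lt_R0 q Hq); lra.
  - replace (Derive (fun t' => Jd q d c1 c2 m n Delta t') t) with 0
      by (symmetry; apply is_derive_unique, is_derive_Jd_t).
    replace (Derive (fun D' => Jd q d c1 c2 m n D' t) Delta) with 0
      by (symmetry; apply is_derive_unique, is_derive_Jd_Delta).
    replace (Derive (fun m' => Jd q d c1 c2 m' n Delta t) m)
      with (- sqrt q * c2 * ((- 2 * m + 2) * ln d / (- m ^ 2 + 2 * m - d) ^ 2))
      by (symmetry; apply is_derive_unique, is_derive_Jd_m, Hden).
    unfold F, pstar; rewrite hjb_obj_pstar by lra.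
    unfold hd; field; split; [exact Hden | lra].
Qed.
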